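(* Let $\mathbb F$ be a field, $A,B$ rings which are $\mathbb F$-algebras, $\mathcal E$ a right functional $A$-module and $\mathcal F$ a right functional $B$-module (all $\mathbb F$-vector spaces, maps $\mathbb F$-linear). The $\mathbb F$-algebra homomorphism $\pi\colon\mathrm{Hom}_A(\mathcal E)\otimes_{\mathbb F}\mathrm{Hom}_B(\mathcal F)\to\mathrm{Hom}_{A\otimes B}(\mathcal E\otimes\mathcal F)$, $\pi(S\otimes T)=S\otimes T$, restricts to an isomorphism $\mathcal K_A(\mathcal E)\otimes\mathcal K_B(\mathcal F)\to\mathcal K_{A\otimes B}(\mathcal E\otimes\mathcal F)$ and to an injection $\mathcal L_A(\mathcal E)\otimes\mathcal L_B(\mathcal F)\to\mathcal L_{A\otimes B}(\mathcal E\otimes\mathcal F)$.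
   Context: $G$ is a discrete group; all rings are associative, not necessarily commutative or unital $\mathbb F$-algebras with $G$-actions (trivial on $\mathbb F$), all tensor products are $\mathbb F$-balanced. A right functional $A$-module is a right $A$-module $\mathcal E$ with a $G$-action $S$ ($S_g(\xi a)=S_g(\xi)\alpha_g(a)$) and a $G$-invariant left $A$-submodule $\Theta_A(\mathcal E)\subseteq\mathrm{Hom}_A(\mathcal E,A)$. $\mathcal K_A(\mathcal E)$ is the ring of finite sums of $\theta_{\eta,\varphi}(\xi)=\eta\varphi(\xi)$; $\mathcal L_A(\mathcal E)$ is the ring of $V\in\mathrm{Hom}_A(\mathcal E)$ with $\varphi\circ V\in\Theta_A(\mathcal E)$ for all $\varphi\in\Theta_A(\mathcal E)$. The external tensor product $\mathcal E\otimes\mathcal F$ is a right $A\otimes B$-module with diagonal $G$-action and functional space consisting of all finite sums of $\varphi\otimes\psi$, $(\varphi\otimes\psi)(\xi\otimes\eta)=\varphi(\xi)\otimes\psi(\eta)$, for $\varphi\in\Theta_A(\mathcal E)$, $\psi\in\Theta_B(\mathcal F)$. *)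

From mathcomp Require Import all_boot all_algebra.
From mathcomp Require Import functions.
From Stdlib Require List.
Set Implicit Arguments. Unset Strict Implicit. Unset Printing Implicit Defensive.
Import GRing.Theory.
Local Open Scope ring_scope.

Section Defs.
Variable F : fieldType.

Definition is_group (G : Type) (gmul : G -> G -> G) (g1 : G) (ginv : G -> G)
  : Prop :=
  [/\ forall x y z, gmul x (gmul y z) = gmul (gmul x y) z,
      forall x, gmul g1 x = x, forall x, gmul x g1 = x,
      forall x, gmul (ginv x) x = g1 & forall x, gmul x (ginv x) = g1].

Definition is_nualg (A : lmodType F) (mul : A -> A -> A) : Prop :=
  [/\ forall a b c, mul a (mul b c) = mul (mul a b) c,
      forall a a' b, mul (a + a') b = mul a b + mul a' b,
      forall a b b', mul a (b + b') = mul a b + mul a b',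
      forall (k : F) a b, mul (k *: a) b = k *: mul a b
    & forall (k : F) a b, mul a (k *: b) = k *: mul a b].

Definition is_alg_action (G : Type) (gmul : G -> G -> G) (g1 : G)
  (A : lmodType F) (mul : A -> A -> A) (alpha : G -> A -> A) : Prop :=
  [/\ forall g (k : F) a a', alpha g (k *: a + a') = k *: alpha g a + alpha g a',
      forall g a b, alpha g (mul a b) = mul (alpha g a) (alpha g b),
      forall a, alpha g1 a = a
    & forall g h a, alpha (gmul g h) a = alpha g (alpha h a)].

Definition is_rmod (A : lmodType F) (mul : A -> A -> A)
  (E : lmodType F) (act : E -> A -> E) : Prop :=
  [/\ forall x x' a, act (x + x') a = act x a + act x' a,
      forall x a a', act x (a + a') = act x a + act x a',
      forall (k : F) x a, act (k *: x) a = k *: act x a,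
      forall (k : F) x a, act x (k *: a) = k *: act x a
    & forall x a b, act (act x a) b = act x (mul a b)].

Definition is_Hom_to (A : lmodType F) (mul : A -> A -> A)
  (E : lmodType F) (act : E -> A -> E) (phi : E -> A) : Prop :=
  (forall (k : F) x x', phi (k *: x + x') = k *: phi x + phi x') /\
  (forall x a, phi (act x a) = mul (phi x) a).

Definition is_Hom (A : lmodType F) (E : lmodType F) (act : E -> A -> E)
  (S : E -> E) : Prop :=
  (forall (k : F) x x', S (k *: x + x') = k *: S x + S x') /\
  (forall x a, S (act x a) = act (S x) a).

Definition is_functional_module (G : Type) (gmul : G -> G -> G) (g1 : G)
  (ginv : G -> G) (A : lmodType F) (mul : A -> A -> A) (alpha : G -> A -> A)
  (E : lmodType F) (act : E -> A -> E) (SG : G -> E -> E)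
  (Theta : (E -> A) -> Prop) : Prop :=
  [/\ is_rmod mul act,
      [/\ forall g (k : F) x x', SG g (k *: x + x') = k *: SG g x + SG g x',
          forall x, SG g1 x = x,
          forall g h x, SG (gmul g h) x = SG g (SG h x)
        & forall g x a, SG g (act x a) = act (SG g x) (alpha g a)],
      forall phi, Theta phi -> is_Hom_to mul act phi,
      [/\ Theta (fun _ => 0),
          forall phi psi, Theta phi -> Theta psi -> Theta (fun x => phi x + psi x),
          forall (k : F) phi, Theta phi -> Theta (fun x => k *: phi x)
        & forall a phi, Theta phi -> Theta (fun x => mul a (phi x))]
    &
      forall g phi, Theta phi -> Theta (fun x => alpha g (phi (SG (ginv g) x)))].

(* K_A(E): finite sums of theta_{eta,phi}, xi |-> eta phi(xi), phi in Theta. *)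
Definition in_K (A : lmodType F) (E : lmodType F) (act : E -> A -> E)
  (Theta : (E -> A) -> Prop) (T : E -> E) : Prop :=
  exists l : seq (E * (E -> A)),
    (forall p, List.In p l -> Theta p.2) /\
    T = (fun x => \sum_(p <- l) act p.1 (p.2 x)).

Definition in_L (A : lmodType F) (E : lmodType F) (act : E -> A -> E)
  (Theta : (E -> A) -> Prop) (V : E -> E) : Prop :=
  is_Hom act V /\ (forall phi, Theta phi -> Theta (fun x => phi (V x))).

(* Algebraic tensor products over F.  An element of U (x)_F V is       *)
(* represented by a formal finite sum  sum_i u_i (x) v_i, i.e. a list   *)
(* of pairs (scalars are absorbed in the first factor).  For F-subspaces *)
(* P <= U, Q <= V, a formal sum with entries in P x Q is ZERO in the     *)
(* tensor product P (x)_F Q iff every F-bilinear map on P x Q (to any    *)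
(* F-vector space) kills it -- this is the universal property.          *)
Definition bilinear_on (U V : lmodType F) (P : U -> Prop) (Q : V -> Prop)
  (W : lmodType F) (b : U -> V -> W) : Prop :=
  (forall (k : F) u u' v, P u -> P u' -> Q v ->
     b (k *: u + u') v = k *: b u v + b u' v) /\
  (forall (k : F) u v v', P u -> Q v -> Q v' ->
     b u (k *: v + v') = k *: b u v + b u v').

Definition tzero (U V : lmodType F) (P : U -> Prop) (Q : V -> Prop)
  (s : seq (U * V)) : Prop :=
  forall (W : lmodType F) (b : U -> V -> W), bilinear_on P Q b ->
    \sum_(p <- s) b p.1 p.2 = 0.

Definition tsub (U V : lmodType F) (s t : seq (U * V)) : seq (U * V) :=
  s ++ [seq (- p.1, p.2) | p <- t].

Definition tequiv (U V : lmodType F) (s t : seq (U * V)) : Prop :=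
  tzero (fun _ : U => True) (fun _ : V => True) (tsub s t).

Definition tact (A B E Fm : lmodType F) (actE : E -> A -> E)
  (actF : Fm -> B -> Fm) (z : seq (E * Fm)) (y : seq (A * B))
  : seq (E * Fm) :=
  [seq (actE p.1 q.1, actF p.2 q.2) | p <- z, q <- y].

Definition tfun (A B E Fm : lmodType F) (Phi : seq ((E -> A) * (Fm -> B)))
  (z : seq (E * Fm)) : seq (A * B) :=
  [seq (f.1 p.1, f.2 p.2) | f <- Phi, p <- z].

Definition in_Theta_tensor (A B E Fm : lmodType F)
  (ThE : (E -> A) -> Prop) (ThF : (Fm -> B) -> Prop)
  (Phi : seq ((E -> A) * (Fm -> B))) : Prop :=
  forall f, List.In f Phi -> ThE f.1 /\ ThF f.2.

(* element  sum_j theta_{zeta_j, Phi_j}  of K_{A(x)B}(E (x) F), applied *)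
Definition kapp (A B E Fm : lmodType F) (actE : E -> A -> E)
  (actF : Fm -> B -> Fm)
  (ks : seq (seq (E * Fm) * seq ((E -> A) * (Fm -> B)))) (z : seq (E * Fm))
  : seq (E * Fm) :=
  flatten [seq tact actE actF k.1 (tfun k.2 z) | k <- ks].

(* pi (sum_i S_i (x) T_i), applied to an element of E (x) F *)
Definition papp (E Fm : lmodType F) (s : seq ((E -> E) * (Fm -> Fm)))
  (z : seq (E * Fm)) : seq (E * Fm) :=
  [seq (st.1 p.1, st.2 p.2) | st <- s, p <- z].

End Defs.

(* Both maps are computed by expanding finite sums of rank-one operators
   theta_{eta,phi}, so pi sends K_A(E) (x) K_B(F) onto K_{A(x)B}(E (x) F) and
   L_A(E) (x) L_B(F) into L_{A(x)B}(E (x) F) by bookkeeping alone.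

   Injectivity holds for any two subspaces P, Q of operators: if
   sum_i S_i x (x) T_i y = 0 in E (x) F for all x, y, then sum_i S_i (x) T_i = 0
   in P (x) Q.  If S_0 = sum_{i>0} c_i S_i, the
   sum equals sum_{i>0} S_i (x) (T_i + c_i T_0), which is shorter.  Otherwise
   T_0 = 0: if T_0 y <> 0, a linear functional mu with mu (T_0 y) = 1 (Zorn's
   lemma) turns the relation into S_0 = - sum_{i>0} mu (T_i y) S_i. *)

From mathcomp Require Import all_boot all_algebra.
From mathcomp Require Import functions.
From Stdlib Require List.
From mathcomp Require Import boolp classical_sets.
Set Implicit Arguments. Unset Strict Implicit. Unset Printing Implicit Defensive.
Import GRing.Theory.
Local Open Scope ring_scope.

Section LinearFunctional.
Local Open Scope classical_set_scope.
Variables (F : fieldType) (V : lmodType F).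

Definition linear_graph (G : set (V * F)) :=
  (forall x a b, G (x, a) -> G (x, b) -> a = b) /\
  (forall k x a y b, G (x, a) -> G (y, b) -> G (k *: x + y, k * a + b)).

Lemma linear_graph_extend (M : set (V * F)) x :
  linear_graph M -> M (0, 0) -> (forall a, ~ M (x, a)) ->
  linear_graph [set p | exists y a c, M (y, a) /\ p = (y + c *: x, a)].
Proof.
move=> [funM linM] M00 xM; split.
  move=> _ a _ [y [{}a [c [My [-> ->]]]]] [y' [a' [c' [My' [yE ->]]]]].
  have cc' : c = c'.
    apply: contrapT => /eqP; rewrite -subr_eq0 => ne.
    (* otherwise [x = (c - c')^-1 (y' - y)] would already be in the domain of [M] *)
    apply: (xM ((c - c')^-1 * (- a + a') + 0)).
    have -> : x = (c - c')^-1 *: ((-1) *: y + y') + 0.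
      rewrite addr0 scaleN1r; apply: (scalerI ne).
      have -> : y' = y + c *: x - c' *: x by rewrite yE addrK.
      by rewrite scalerA divff // scale1r scalerBl addrA addKr.
    by apply: (linM) M00; rewrite -[- a]mulN1r; apply: (linM).
  by move: yE; rewrite cc' => /addIr yy'; rewrite yy' in My; apply: (funM) My'.
move=> k _ _ _ _ [y [a [c [My [-> ->]]]]] [y' [a' [c' [My' [-> ->]]]]].
exists (k *: y + y'), (k * a + a'), (k * c + c'); split; first exact: linM.
by rewrite scalerDr scalerDl scalerA addrACA.
Qed.

Lemma linear_graph_line (v : V) : v != 0 ->
  linear_graph [set p | exists c, p = (c *: v, c)].
Proof.
move=> v0; split=> [x a b [c [-> ->]] [c' [cc' ->]]|k x a y b [c [-> ->]] [c' [-> ->]]].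
  have : (c - c') *: v = 0 by rewrite scalerBl cc' subrr.
  by move/eqP; rewrite scaler_eq0 (negPf v0) orbF subr_eq0 => /eqP.
by exists (k * c + c'); rewrite scalerDl scalerA.
Qed.

Lemma linear_graph_bigcup (L : set (V * F)) (C : set (set (V * F))) :
  linear_graph L -> (forall X, C X -> linear_graph (L `|` X)) ->
  total_on C subset -> linear_graph (L `|` \bigcup_(X in C) X).
Proof.
move=> LL CL totC.
have common p q : (L `|` \bigcup_(X in C) X) p -> (L `|` \bigcup_(X in C) X) q ->
    exists2 H, linear_graph H & [/\ H p, H q & H `<=` L `|` \bigcup_(X in C) X].
  have sub X : C X -> L `|` X `<=` L `|` \bigcup_(X in C) X.
    by move=> CX z [Lz|Xz]; [left|right; exists X].
  case=> [Lp|[X CX Xp]] [Lq|[Y CY Yq]].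
  - by exists L => //; split=> // z Lz; left.
  - by exists (L `|` Y); [exact: CL|split; [left|right|exact: sub]].
  - by exists (L `|` X); [exact: CL|split; [right|left|exact: sub]].
  - have [XY|YX] := totC _ _ CX CY.
    + by exists (L `|` Y); [exact: CL|split; [right; apply: XY|right|exact: sub]].
    + by exists (L `|` X); [exact: CL|split; [right|right; apply: YX|exact: sub]].
split=> [x a b xa xb|k x a y b xa yb].
  by have [H [funH _] [Hxa Hxb _]] := common _ _ xa xb; apply: funH Hxa Hxb.
by have [H [_ linH] [Hxa Hyb /(_ _ (linH k _ _ _ _ Hxa Hyb))]] := common _ _ xa yb.
Qed.

Lemma exists_linear_functional (v : V) : v != 0 ->
  exists mu : V -> F, (forall k x y, mu (k *: x + y) = k * mu x + mu y) /\ mu v = 1.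
Proof.
move=> v0; pose line := [set p | exists c, p = (c *: v, c)].
(* Zorn is applied to the [G] for which [line `|` G] is a linear graph, so
   that the empty chain has an upper bound. *)
pose P (G : set (V * F)) := linear_graph (line `|` G).
have [A [PA maxA]] :=
  @Zorn_bigcup _ P (fun C CP => linear_graph_bigcup (linear_graph_line v0) CP).
pose M := line `|` A.
have M00 : M (0, 0) by left; exists 0; rewrite scale0r.
have Mtotal x : exists a, M (x, a).
  apply: contrapT => /forallNP xM.
  pose B := [set p | exists y a c, M (y, a) /\ p = (y + c *: x, a)].
  have MB : M `<=` B by case=> y a My; exists y, a, 0; rewrite scale0r addr0.
  have lineB : line `|` B = B.
    by apply/seteqP; split=> p; [case=> // lp; apply: MB; left|right].
  apply: (maxA B); last by rewrite /P lineB; apply: linear_graph_extend.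
  split=> [p Ap|BA]; first by apply: MB; right.
  by apply: (xM 0); right; apply: BA; exists 0, 0, 1; rewrite scale1r add0r.
pose mu x := projT1 (cid (Mtotal x)).
have muP x : M (x, mu x) by rewrite /mu; case: cid.
have [funM linM] : linear_graph M := PA.
exists mu; split=> [k x y|]; first exact: funM (muP _) (linM _ _ _ _ _ (muP x) (muP y)).
by apply: funM (muP v) _; left; exists 1; rewrite scale1r.
Qed.

End LinearFunctional.

Lemma In_map {T1 T2 : Type} {f : T1 -> T2} {s : seq T1} {y} :
  List.In y (map f s) -> exists2 x, List.In x s & y = f x.
Proof.
elim: s => //= x s IHs [<-|/IHs [x' sx' ->]]; first by exists x; [left|].
by exists x'; [right|].
Qed.

Lemma In_cat {T : Type} {s1 s2 : seq T} {x} :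
  List.In x (s1 ++ s2) -> List.In x s1 \/ List.In x s2.
Proof. by elim: s1 => [|y s1 IHs1] /=; [right|case=> [<-|/IHs1 []]; tauto]. Qed.

Lemma In_allpairs {S T R : Type} {f : S -> T -> R} {s : seq S} {t : seq T} {z} :
  List.In z [seq f x y | x <- s, y <- t] ->
  exists x y, [/\ List.In x s, List.In y t & z = f x y].
Proof.
elim: s => //= x s IHs /In_cat [|/IHs [x' [y [sx' ty ->]]]].
  by case/In_map=> y ty ->; exists x, y; split=> //; left.
by exists x', y; split=> //; right.
Qed.

Lemma eq_big_In (R : nmodType) (I : Type) (s : seq I) (F1 F2 : I -> R) :
  (forall i, List.In i s -> F1 i = F2 i) ->
  \sum_(i <- s) F1 i = \sum_(i <- s) F2 i.
Proof.
elim: s => [|i s IHs] eqF; first by rewrite !big_nil.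
by rewrite !big_cons eqF ?IHs //; [move=> j sj; apply: eqF; right|left].
Qed.

Definition lsubspace (F : fieldType) (U : lmodType F) (P : U -> Prop) :=
  P 0 /\ forall k u u', P u -> P u' -> P (k *: u + u').

Lemma lsubspaceT (F : fieldType) (U : lmodType F) : lsubspace (fun _ : U => True).
Proof. by []. Qed.

Lemma lsubspace_sum (F : fieldType) (U : lmodType F) (P : U -> Prop)
    (I : Type) (s : seq I) (f : I -> U) :
  lsubspace P -> (forall i, List.In i s -> P (f i)) -> P (\sum_(i <- s) f i).
Proof.
move=> [P0 linP]; elim: s => [|i s IHs] Pf; first by rewrite big_nil.
rewrite big_cons -[f i]scale1r; apply: linP; first by apply: Pf; left.
by apply: IHs => j sj; apply: Pf; right.
Qed.

Lemma lsubspaceZ (F : fieldType) (U : lmodType F) (P : U -> Prop) k u :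
  lsubspace P -> P u -> P (k *: u).
Proof. by move=> [P0 linP] Pu; rewrite -[_ *: u]addr0; apply: linP. Qed.

Section BilinearOn.
Variables (F : fieldType) (U V W : lmodType F) (P : U -> Prop) (Q : V -> Prop).
Hypotheses (subP : lsubspace P) (subQ : lsubspace Q).
Variables (b : U -> V -> W).
Hypothesis bilin_b : bilinear_on P Q b.

Lemma bilinear_on0l v : Q v -> b 0 v = 0.
Proof.
move=> Qv; have := bilin_b.1 (-1) 0 0 v subP.1 subP.1 Qv.
by rewrite !scaleN1r oppr0 addr0 addNr.
Qed.

Lemma bilinear_on0r u : P u -> b u 0 = 0.
Proof.
move=> Pu; have := bilin_b.2 (-1) u 0 0 Pu subQ.1 subQ.1.
by rewrite !scaleN1r oppr0 addr0 addNr.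
Qed.

Lemma bilinear_onZl k u v : P u -> Q v -> b (k *: u) v = k *: b u v.
Proof.
by move=> Pu Qv; rewrite -[k *: u]addr0 bilin_b.1 ?bilinear_on0l ?addr0 //; case: subP.
Qed.

Lemma bilinear_on_suml (I : Type) (s : seq I) (f : I -> U) v :
  (forall i, List.In i s -> P (f i)) -> Q v ->
  b (\sum_(i <- s) f i) v = \sum_(i <- s) b (f i) v.
Proof.
move=> Pf Qv; elim: s Pf => [|i s IHs] Pf; first by rewrite !big_nil bilinear_on0l.
have Pfs j : List.In j s -> P (f j) by move=> sj; apply: Pf; right.
rewrite !big_cons -IHs // -[f i]scale1r bilin_b.1 ?scale1r //; first by apply: Pf; left.
exact: lsubspace_sum.
Qed.

Lemma bilinear_on_sumr (I : Type) (s : seq I) (g : I -> V) u :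
  P u -> (forall i, List.In i s -> Q (g i)) ->
  b u (\sum_(i <- s) g i) = \sum_(i <- s) b u (g i).
Proof.
move=> Pu Qg; elim: s Qg => [|i s IHs] Qg; first by rewrite !big_nil bilinear_on0r.
have Qgs j : List.In j s -> Q (g j) by move=> sj; apply: Qg; right.
rewrite !big_cons -IHs // -[g i]scale1r bilin_b.2 ?scale1r //; first by apply: Qg; left.
exact: lsubspace_sum.
Qed.

Lemma bilinear_on_sum (I J : Type) (s : seq I) (t : seq J) (f : I -> U) (g : J -> V) :
  (forall i, List.In i s -> P (f i)) -> (forall j, List.In j t -> Q (g j)) ->
  b (\sum_(i <- s) f i) (\sum_(j <- t) g j) = \sum_(i <- s) \sum_(j <- t) b (f i) (g j).
Proof.
move=> Pf Qg; rewrite bilinear_on_suml //; last exact: lsubspace_sum.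
by apply: eq_big_In => i si; apply: bilinear_on_sumr => //; apply: Pf.
Qed.

Lemma bilinear_on_shift (I : Type) (s : seq I) (c : I -> F) (f : I -> U) (g : I -> V) t :
  Q t -> (forall i, List.In i s -> P (f i) /\ Q (g i)) ->
  b (\sum_(i <- s) c i *: f i) t + \sum_(i <- s) b (f i) (g i) =
  \sum_(i <- s) b (f i) (c i *: t + g i).
Proof.
move=> Qt Pfg; rewrite bilinear_on_suml // => [|i si]; last first.
  by apply: lsubspaceZ => //; case: (Pfg i si).
rewrite -big_split; apply: eq_big_In => i si; have [Pf Qg] := Pfg i si.
by rewrite bilinear_onZl // bilin_b.2.
Qed.

End BilinearOn.

Section PointwiseTensor.
Variables (F : fieldType) (X Y : Type) (U V : lmodType F).

Definition evals (s : seq ((X -> U) * (Y -> V))) (x : X) (y : Y) : seq (U * V) :=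
  [seq (st.1 x, st.2 y) | st <- s].

Lemma tzero_evals_head (S0 : X -> U) (T0 : Y -> V) s :
  (forall x y, tzero (fun _ => True) (fun _ => True) (evals ((S0, T0) :: s) x y)) ->
  T0 = 0 \/ exists c : (X -> U) * (Y -> V) -> F, S0 = \sum_(st <- s) c st *: st.1.
Proof.
move=> hz; case: (pselect (exists c : (X -> U) * (Y -> V) -> F,
  S0 = \sum_(st <- s) c st *: st.1)) => [|noc]; [by right|left].
apply/funext => y; apply: contrapT => /eqP T0y.
have [mu [mu_lin mu1]] := exists_linear_functional T0y.
have bilin_mu : bilinear_on (fun _ => True) (fun _ => True) (fun (e : U) f => mu f *: e).
  split=> [k e e' f _ _ _|k e f f' _ _ _]; first by rewrite scalerDr !scalerA mulrC.
  by rewrite mu_lin scalerDl scalerA.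
apply: noc; exists (fun st => - mu (st.2 y)); apply/funext => x.
have := hz x y _ _ bilin_mu; rewrite big_cons big_map /= mu1 scale1r.
move/eqP; rewrite addr_eq0 => /eqP ->; rewrite fct_sumE -sumrN.
by apply: eq_bigr => st _; rewrite scaleNr.
Qed.

Lemma tzero_evals (P : (X -> U) -> Prop) (Q : (Y -> V) -> Prop) s :
  lsubspace P -> lsubspace Q -> (forall st, List.In st s -> P st.1 /\ Q st.2) ->
  (forall x y, tzero (fun _ => True) (fun _ => True) (evals s x y)) -> tzero P Q s.
Proof.
move=> subP subQ; have [n] := ubnP (size s); elim: n s => // n IHn.
case=> [_ _ _ W b _|[S0 T0] s]; first exact: big_nil.
rewrite ltnS => lt_sn Ps hz; have [PS0 QT0] := Ps _ (or_introl erefl).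
have Ps' st : List.In st s -> P st.1 /\ Q st.2 by move=> sst; apply: Ps; right.
have [T00|[c S0E]] := tzero_evals_head hz.
  subst T0; move=> W b bb; rewrite big_cons /= (bilinear_on0r subQ bb) // add0r.
  apply: IHn => // x y W' b' bb'; have := hz x y W' b' bb'.
  by rewrite big_cons /= (bilinear_on0r (lsubspaceT V) bb') // add0r.
pose s' := [seq (st.1, c st *: T0 + st.2) | st <- s].
have Ps'' st : List.In st s' -> P st.1 /\ Q st.2.
  move=> s'st; have [st' sst' ->] := In_map s'st.
  by have [Pst' Qst'] := Ps' st' sst'; split=> //; apply: subQ.2.
have hz' x y : tzero (fun _ => True) (fun _ => True) (evals s' x y).
  move=> W b bb; have := hz x y W b bb; rewrite big_cons !big_map /= S0E.
  have -> : (\sum_(st <- s) c st *: st.1) x = \sum_(st <- s) c st *: st.1 x.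
    by rewrite fct_sumE; apply: eq_bigr => st _; rewrite scalrfctE.
  by rewrite (bilinear_on_shift (lsubspaceT U) bb).
move=> W b bb; have := IHn s' _ Ps'' hz' W b bb; rewrite size_map => /(_ lt_sn).
by rewrite big_map big_cons S0E -(bilinear_on_shift subP bb) // => i /Ps'.
Qed.

End PointwiseTensor.

Section OperatorSubspaces.
Variables (F : fieldType) (A E : lmodType F) (mul : A -> A -> A) (act : E -> A -> E).
Variable Th : (E -> A) -> Prop.
Hypothesis rmod : is_rmod mul act.

Lemma in_K_lsubspace : lsubspace (in_K act Th).
Proof.
split=> [|k _ _ [l [Thl ->]] [l' [Thl' ->]]].
  by exists [::]; split=> //; apply/funext => x; rewrite big_nil.
exists ([seq (k *: p.1, p.2) | p <- l] ++ l'); split.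
  by move=> _ /In_cat [/In_map [p lp ->]|/Thl'] //; apply: (Thl p lp).
apply/funext => x; rewrite addrfctE scalrfctE /= big_cat big_map scaler_sumr.
by congr (_ + _); apply: eq_bigr => p _; case: rmod => _ _ -> _ _.
Qed.

Lemma in_K_rank_one e phi : Th phi -> in_K act Th (fun x => act e (phi x)).
Proof.
by exists [:: (e, phi)]; split=> [p [<-|]|] //; apply/funext => x; rewrite big_seq1.
Qed.

Lemma act0l a : act 0 a = 0.
Proof. by case: rmod => _ _ actZl _ _; have := actZl 0 0 a; rewrite !scale0r. Qed.

Hypothesis Th_Hom : forall phi, Th phi -> is_Hom_to mul act phi.
Hypothesis Th0 : Th (fun _ => 0).
Hypothesis ThD : forall phi psi, Th phi -> Th psi -> Th (fun x => phi x + psi x).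
Hypothesis ThZ : forall (k : F) phi, Th phi -> Th (fun x => k *: phi x).

Lemma in_L_lsubspace : lsubspace (in_L act Th).
Proof.
case: rmod => actDl _ actZl _ _; split.
  split=> [|phi /Th_Hom [phi_lin _]].
    by split=> [k x x'|x a] /=; rewrite ?act0l ?scaler0 ?addr0.
  have phi0 : phi 0 = 0 by have := phi_lin (-1) 0 0; rewrite !scaleN1r oppr0 addr0 addNr.
  by rewrite (_ : (fun x => _) = fun _ => 0) //; apply/funext => x /=.
move=> k u u' [[u_lin u_act] Thu] [[u'_lin u'_act] Thu']; split; first split.
- move=> k' x x'; rewrite !addrfctE !scalrfctE /= u_lin u'_lin !scalerDr !scalerA.
  by rewrite mulrC addrACA [k' * k]mulrC.
- by move=> x a; rewrite !addrfctE !scalrfctE /= u_act u'_act actDl actZl.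
move=> phi Thphi; have [phi_lin _] := Th_Hom Thphi.
rewrite (_ : (fun x => _) = fun x => k *: phi (u x) + phi (u' x)).
  by apply: ThD; [apply: ThZ; apply: Thu|apply: Thu'].
by apply/funext => x; rewrite !addrfctE !scalrfctE /= phi_lin.
Qed.

End OperatorSubspaces.

Definition tensor_eq (F : fieldType) (U V : lmodType F) (s t : seq (U * V)) :=
  forall (W : lmodType F) (b : U -> V -> W),
    bilinear_on (fun _ => True) (fun _ => True) b ->
    \sum_(p <- s) b p.1 p.2 = \sum_(p <- t) b p.1 p.2.

Section TensorEq.
Variables (F : fieldType) (U V : lmodType F).

Lemma tensor_eq_tequiv (s t : seq (U * V)) : tensor_eq s t -> tequiv s t.
Proof.
move=> st W b bb; rewrite big_cat big_map st //=.
rewrite [X in _ + X](eq_bigr (fun p => - b p.1 p.2)) ?sumrN ?subrr // => p _.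
by rewrite -scaleN1r (bilinear_onZl (lsubspaceT U) bb) // scaleN1r.
Qed.

Lemma tensor_eq_cat (s1 s2 t1 t2 : seq (U * V)) :
  tensor_eq s1 t1 -> tensor_eq s2 t2 -> tensor_eq (s1 ++ s2) (t1 ++ t2).
Proof. by move=> st1 st2 W b bb; rewrite !big_cat st1 // st2. Qed.

End TensorEq.

Section TensorOperators.
Variables (F : fieldType) (A B E Fm : lmodType F).
Variables (actE : E -> A -> E) (actF : Fm -> B -> Fm).
Variables (ThE : (E -> A) -> Prop) (ThF : (Fm -> B) -> Prop).

Lemma papp_cat (s1 s2 : seq ((E -> E) * (Fm -> Fm))) z :
  papp (s1 ++ s2) z = papp s1 z ++ papp s2 z.
Proof. exact: allpairs_cat. Qed.

Lemma kapp_cat (ks1 ks2 : seq (seq (E * Fm) * seq ((E -> A) * (Fm -> B)))) z :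
  kapp actE actF (ks1 ++ ks2) z = kapp actE actF ks1 z ++ kapp actE actF ks2 z.
Proof. by rewrite /kapp map_cat flatten_cat. Qed.

Lemma tequiv_papp_nil_evals (s : seq ((E -> E) * (Fm -> Fm))) :
  (forall z, tequiv (papp s z) [::]) ->
  forall x y, tzero (fun _ => True) (fun _ => True) (evals s x y).
Proof.
move=> s0 x y; have -> : evals s x y = papp s [:: (x, y)].
  by elim: s {s0} => //= st s ->.
by have := s0 [:: (x, y)]; rewrite /tequiv /tsub cats0.
Qed.

Lemma sum_papp (W : lmodType F) (b : E -> Fm -> W) s z :
  \sum_(p <- papp s z) b p.1 p.2 = \sum_(st <- s) \sum_(p <- z) b (st.1 p.1) (st.2 p.2).
Proof. exact: big_allpairs_dep. Qed.

Lemma sum_kapp (W : lmodType F) (b : E -> Fm -> W) ks z :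
  \sum_(p <- kapp actE actF ks z) b p.1 p.2 =
  \sum_(k <- ks) \sum_(r <- k.1) \sum_(f <- k.2) \sum_(p <- z)
    b (actE r.1 (f.1 p.1)) (actF r.2 (f.2 p.2)).
Proof.
rewrite /kapp big_flatten big_map; apply: eq_bigr => k _.
rewrite /tact big_allpairs_dep; apply: eq_bigr => r _.
by rewrite /tfun big_allpairs_dep.
Qed.

Lemma tensor_eq_papp1_K (lS : seq (E * (E -> A))) (lT : seq (Fm * (Fm -> B))) z :
  tensor_eq
    (papp [:: (fun x => \sum_(r <- lS) actE r.1 (r.2 x),
               fun y => \sum_(q <- lT) actF q.1 (q.2 y))] z)
    (kapp actE actF [seq ([:: (r.1, q.1)], [:: (r.2, q.2)]) | r <- lS, q <- lT] z).
Proof.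
move=> W b bb; rewrite sum_papp sum_kapp big_seq1 big_allpairs_dep /=.
under eq_bigr do rewrite (bilinear_on_sum (lsubspaceT E) (lsubspaceT Fm) bb) //.
rewrite exchange_big; apply: eq_bigr => r _; rewrite exchange_big.
by apply: eq_bigr => q _; rewrite !big_seq1.
Qed.

Lemma papp_K_eq_kapp s :
  (forall st, List.In st s -> in_K actE ThE st.1 /\ in_K actF ThF st.2) ->
  exists ks, (forall k, List.In k ks -> in_Theta_tensor ThE ThF k.2) /\
    forall z, tensor_eq (papp s z) (kapp actE actF ks z).
Proof.
elim: s => [|[S T] s IHs] Ks; first by exists [::]; split=> // z W b _.
have [ks [Thks ks_eq]] := IHs (fun st sst => Ks st (or_intror sst)).
have /= [[lS [ThS ->]] [lT [ThT ->]]] := Ks _ (or_introl erefl).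
exists ([seq ([:: (r.1, q.1)], [:: (r.2, q.2)]) | r <- lS, q <- lT] ++ ks); split.
  move=> _ /In_cat [/In_allpairs [r [q [lSr lTq ->]]]|/Thks //] f [<-|//].
  by split; [apply: ThS|apply: ThT].
move=> z; rewrite -cat1s papp_cat kapp_cat.
exact: tensor_eq_cat (tensor_eq_papp1_K lS lT z) (ks_eq z).
Qed.

Lemma kapp_eq_papp_K ks :
  (forall k, List.In k ks -> in_Theta_tensor ThE ThF k.2) ->
  exists s, (forall st, List.In st s -> in_K actE ThE st.1 /\ in_K actF ThF st.2) /\
    forall z, tensor_eq (papp s z) (kapp actE actF ks z).
Proof.
elim: ks => [|k ks IHks] Thks; first by exists [::]; split=> // z W b _.
have [s [Ks s_eq]] := IHks (fun k' kk' => Thks k' (or_intror kk')).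
exists ([seq (fun x => actE r.1 (f.1 x), fun y => actF r.2 (f.2 y))
         | r <- k.1, f <- k.2] ++ s).
split=> [_ /In_cat [/In_allpairs [r [f [kr kf ->]]]|/Ks //]|z].
  by have [ThEf ThFf] := Thks k (or_introl erefl) f kf; split; apply: in_K_rank_one.
rewrite papp_cat -cat1s kapp_cat; apply: tensor_eq_cat (s_eq z) => W b _.
by rewrite sum_papp sum_kapp big_seq1 big_allpairs_dep.
Qed.

Lemma papp_L_tact s :
  (forall st, List.In st s -> in_L actE ThE st.1 /\ in_L actF ThF st.2) ->
  forall z y, tensor_eq (papp s (tact actE actF z y)) (tact actE actF (papp s z) y).
Proof.
move=> Ls z y W b _; rewrite /papp /tact !big_allpairs_dep /=.
apply: eq_big_In => st /Ls [[[_ S_act] _] [[_ T_act] _]].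
rewrite big_allpairs_dep; apply: eq_bigr => p _; apply: eq_bigr => q _.
by rewrite S_act T_act.
Qed.

Lemma tfun_papp_L s :
  (forall st, List.In st s -> in_L actE ThE st.1 /\ in_L actF ThF st.2) ->
  forall Phi, in_Theta_tensor ThE ThF Phi ->
  exists Phi', in_Theta_tensor ThE ThF Phi' /\
    forall z, tensor_eq (tfun Phi (papp s z)) (tfun Phi' z).
Proof.
move=> Ls Phi ThPhi.
exists [seq (fun x => f.1 (st.1 x), fun y => f.2 (st.2 y)) | f <- Phi, st <- s].
split=> [_ /In_allpairs [f [st [Phif sst ->]]]|z W b _].
  have [ThEf ThFf] := ThPhi f Phif; have [[_ S_Th] [_ T_Th]] := Ls st sst.
  by split; [apply: S_Th|apply: T_Th].
rewrite /tfun /papp !big_allpairs_dep; apply: eq_bigr => f _.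
by rewrite big_allpairs_dep.
Qed.

End TensorOperators.

Unset Implicit Arguments.
Set Strict Implicit.

Theorem lemma11p1 (F : fieldType)
  (G : Type) (gmul : G -> G -> G) (g1 : G) (ginv : G -> G)
  (A : lmodType F) (mulA : A -> A -> A) (alphaA : G -> A -> A)
  (B : lmodType F) (mulB : B -> B -> B) (alphaB : G -> B -> B)
  (E : lmodType F) (actE : E -> A -> E) (SE : G -> E -> E)
  (ThE : (E -> A) -> Prop)
  (Fm : lmodType F) (actF : Fm -> B -> Fm) (SF : G -> Fm -> Fm)
  (ThF : (Fm -> B) -> Prop) :
  is_group gmul g1 ginv ->
  is_nualg mulA -> is_alg_action gmul g1 mulA alphaA ->
  is_nualg mulB -> is_alg_action gmul g1 mulB alphaB ->
  is_functional_module gmul g1 ginv mulA alphaA actE SE ThE ->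
  is_functional_module gmul g1 ginv mulB alphaB actF SF ThF ->
  [/\
   (* pi is injective on K_A(E) (x) K_B(F) *)
   forall s : seq ((E -> E) * (Fm -> Fm)),
     (forall st, List.In st s -> in_K actE ThE st.1 /\ in_K actF ThF st.2) ->
     (forall z, tequiv (papp s z) [::]) ->
     tzero (in_K actE ThE) (in_K actF ThF) s,
   (* pi maps K_A(E) (x) K_B(F) into K_{A(x)B}(E (x) F) *)
   forall s : seq ((E -> E) * (Fm -> Fm)),
     (forall st, List.In st s -> in_K actE ThE st.1 /\ in_K actF ThF st.2) ->
     exists ks : seq (seq (E * Fm) * seq ((E -> A) * (Fm -> B))),
       (forall k, List.In k ks -> in_Theta_tensor ThE ThF k.2) /\
       (forall z, tequiv (papp s z) (kapp actE actF ks z)),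
   (* ... and onto K_{A(x)B}(E (x) F) *)
   forall ks : seq (seq (E * Fm) * seq ((E -> A) * (Fm -> B))),
     (forall k, List.In k ks -> in_Theta_tensor ThE ThF k.2) ->
     exists s : seq ((E -> E) * (Fm -> Fm)),
       (forall st, List.In st s -> in_K actE ThE st.1 /\ in_K actF ThF st.2) /\
       (forall z, tequiv (papp s z) (kapp actE actF ks z)),
   (* pi is injective on L_A(E) (x) L_B(F) *)
   forall s : seq ((E -> E) * (Fm -> Fm)),
     (forall st, List.In st s -> in_L actE ThE st.1 /\ in_L actF ThF st.2) ->
     (forall z, tequiv (papp s z) [::]) ->
     tzero (in_L actE ThE) (in_L actF ThF) s
  & (* pi maps L_A(E) (x) L_B(F) into L_{A(x)B}(E (x) F) *)
   forall s : seq ((E -> E) * (Fm -> Fm)),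
     (forall st, List.In st s -> in_L actE ThE st.1 /\ in_L actF ThF st.2) ->
     (forall (z : seq (E * Fm)) (y : seq (A * B)),
        tequiv (papp s (tact actE actF z y)) (tact actE actF (papp s z) y)) /\
     (forall Phi : seq ((E -> A) * (Fm -> B)), in_Theta_tensor ThE ThF Phi ->
        exists Phi' : seq ((E -> A) * (Fm -> B)),
          in_Theta_tensor ThE ThF Phi' /\
          (forall z, tequiv (tfun Phi (papp s z)) (tfun Phi' z)))].
Proof.
move=> _ _ _ _ _ [rmE _ HomE [Th0E ThDE ThZE _] _] [rmF _ HomF [Th0F ThDF ThZF _] _].
split.
- move=> s Ks /tequiv_papp_nil_evals.
  exact: tzero_evals (in_K_lsubspace ThE rmE) (in_K_lsubspace ThF rmF) Ks.
- move=> s /papp_K_eq_kapp [ks [Thks ks_eq]].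
  by exists ks; split=> // z; apply/tensor_eq_tequiv/ks_eq.
- move=> ks /(kapp_eq_papp_K actE actF) [s [Ks s_eq]].
  by exists s; split=> // z; apply/tensor_eq_tequiv/s_eq.
- move=> s Ls /tequiv_papp_nil_evals.
  apply: tzero_evals Ls.
  + exact: in_L_lsubspace rmE HomE Th0E ThDE ThZE.
  + exact: in_L_lsubspace rmF HomF Th0F ThDF ThZF.
- move=> s Ls; split=> [z y|Phi ThPhi].
    exact/tensor_eq_tequiv/(papp_L_tact Ls).
  have [Phi' [ThPhi' Phi_eq]] := tfun_papp_L Ls ThPhi.
  by exists Phi'; split=> // z; apply/tensor_eq_tequiv/Phi_eq.
Qed.
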